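(* Let $T$ be a square-integrable real random variable and let $X$ and $Y$ be independent random variables (on the same probability space as $T$). Then $L^r_T(X)+L^r_T(Y)=L^r_T(X,Y)$.
   Context: For random variables $Z_1,\dots,Z_k$, the restricted (additive, GAM-type) predictive power of $(Z_1,\dots,Z_k)$ for $T$ is $$L^r_T(Z_1,\dots,Z_k)=\sigma^2(T)-\inf\Bigl\{\sigma^2\Bigl(T-\sum_{i=1}^k f_i(Z_i)\Bigr)\ :\ f_i \text{ measurable},\ E[f_i(Z_i)^2]<\infty\Bigr\},$$ i.e. $\sigma^2(T)-\sigma^2(T-E^r[T\mid Z_1,\dots,Z_k])$ where $E^r[T\mid Z_1,\dots,Z_k]$ is the minimum-variance predictor of $T$ among (the $L^2$-closure of) sums of square-integrable functions of the individual $Z_i$. For a single variable this coincides with $\sigma^2(T)-\sigma^2(T-E[T\mid Z_1])$. $\sigma^2$ denotes variance. *)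

From HB Require Import structures.
From mathcomp Require Import all_boot all_order all_algebra.
From mathcomp Require Import all_classical all_reals all_analysis.
Set Implicit Arguments. Unset Strict Implicit. Unset Printing Implicit Defensive.
Import Order.TTheory GRing.Theory Num.Theory.
Local Open Scope classical_set_scope.
Local Open Scope ring_scope.

Definition independent_RV2 {d dX dY} {Om : measurableType d}
  {TX : measurableType dX} {TY : measurableType dY} {R : realType}
  (P : probability Om R) (X : Om -> TX) (Y : Om -> TY) : Prop :=
  forall (A : set TX) (B : set TY), measurable A -> measurable B ->
    P (X @^-1` A `&` Y @^-1` B) = (P (X @^-1` A) * P (Y @^-1` B))%E.

Definition admissible {d dZ} {Om : measurableType d} {TZ : measurableType dZ}
  {R : realType} (P : probability Om R) (Z : Om -> TZ) (f : TZ -> R) : Prop :=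
  measurable_fun setT f /\ (f \o Z) \in Lfun P 2%:E.

Definition Lr1 {d dZ} {Om : measurableType d} {TZ : measurableType dZ}
  {R : realType} (P : probability Om R) (T : Om -> R) (Z : Om -> TZ) : \bar R :=
  ('V_P[T] - ereal_inf [set 'V_P[(T \- (f \o Z))%R] | f in [set f | admissible P Z f]])%E.

Definition Lr2 {d d1 d2} {Om : measurableType d} {T1 : measurableType d1}
  {T2 : measurableType d2} {R : realType} (P : probability Om R)
  (T : Om -> R) (Z1 : Om -> T1) (Z2 : Om -> T2) : \bar R :=
  ('V_P[T] - ereal_inf [set 'V_P[(T \- (f.1 \o Z1) \- (f.2 \o Z2))%R] |
     f in [set f : (T1 -> R) * (T2 -> R) | admissible P Z1 f.1 /\ admissible P Z2 f.2]])%E.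

(* Independence of X and Y makes f(X) and g(Y) uncorrelated for all
   square-integrable f and g: the joint law of (X, Y) is the product of the
   marginal laws, so E[f(X) g(Y)] factorises by Fubini.  Expanding variances,
     var(T - f(X) - g(Y)) = var(T - f(X)) + var(T - g(Y)) - var(T),
   hence the infimum over pairs (f, g) defining L^r_T(X, Y) splits into the
   two infima defining L^r_T(X) and L^r_T(Y). *)

From HB Require Import structures.
From mathcomp Require Import all_boot all_order all_algebra.
From mathcomp Require Import all_classical all_reals all_analysis.
From mathcomp Require Import measurable_realfun lra.
Set Implicit Arguments.
Unset Strict Implicit.
Unset Printing Implicit Defensive.
Import Order.TTheory GRing.Theory Num.Theory.
Local Open Scope classical_set_scope.
Local Open Scope ring_scope.

Section expectation_distribution.
Local Open Scope ereal_scope.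
Context {R : realType} {d d' : measure_display} {Om : measurableType d}
  {T' : measurableType d'} (P : probability Om R) (Z : {RV P >-> T'}).

Lemma integrable_distribution (h : T' -> R) : measurable_fun setT h ->
  (h \o Z)%R \in Lfun P 1 -> (distribution P Z).-integrable setT (EFin \o h).
Proof.
move=> mh hZ1; apply: integrable_pushforward => //.
  exact/measurable_EFinP.
by rewrite preimage_setT; apply/Lfun1_integrable.
Qed.

Lemma expectation_distribution (h : T' -> R) : measurable_fun setT h ->
  (h \o Z)%R \in Lfun P 1 -> 'E_P[h \o Z] = \int[distribution P Z]_x (h x)%:E.
Proof.
move=> mh hZ1; rewrite unlock integral_distribution //.
- exact/measurable_EFinP.
- exact/Lfun1_integrable.
Qed.

End expectation_distribution.

Section uncorrelated_variance.
Local Open Scope ereal_scope.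
Context {R : realType} {d : measure_display} {Om : measurableType d}
  (P : probability Om R).

Lemma Lfun2_Lfun1 (U : Om -> R) : U \in Lfun P 2%:E -> U \in Lfun P 1.
Proof. by apply: Lfun_subset12; exact: fin_num_measure. Qed.

Lemma Lfun2B (U V : Om -> R) :
  U \in Lfun P 2%:E -> V \in Lfun P 2%:E -> (U \- V)%R \in Lfun P 2%:E.
Proof. by move=> U2 V2; apply: (rpredB U2 V2); rewrite lee1n. Qed.

Lemma covariance2_fin_num (U V : Om -> R) :
  U \in Lfun P 2%:E -> V \in Lfun P 2%:E -> covariance P U V \is a fin_num.
Proof.
move=> U2 V2; apply: covariance_fin_num; try exact: Lfun2_Lfun1.
exact: Lfun2_mul_Lfun1.
Qed.

Lemma varianceBB_uncorrelated (T U V : Om -> R) :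
  T \in Lfun P 2%:E -> U \in Lfun P 2%:E -> V \in Lfun P 2%:E ->
  covariance P U V = 0 ->
  'V_P[(T \- U \- V)%R] = 'V_P[(T \- U)%R] + 'V_P[(T \- V)%R] - 'V_P[T].
Proof.
move=> T2 U2 V2 cUV.
have TU2 := Lfun2B T2 U2.
rewrite (varianceB TU2 V2) (covarianceBl T2 U2 V2) cUV sube0 (varianceB T2 V2).
have := variance_fin_num TU2; have := variance_fin_num V2.
have := variance_fin_num T2; have := covariance2_fin_num T2 V2.
move: 'V_P[_] 'V_P[_] 'V_P[_] (covariance P T V) => a b c e.
move=> /fineK <- /fineK <- /fineK <- /fineK <-.
by rewrite -!EFinM -!EFinN -!EFinD; congr EFin; lra.
Qed.

End uncorrelated_variance.

Section independent_product.
Local Open Scope ereal_scope.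
Context {R : realType} {d dX dY : measure_display} {Om : measurableType d}
  {TX : measurableType dX} {TY : measurableType dY} (P : probability Om R)
  (X : {RV P >-> TX}) (Y : {RV P >-> TY}).
Hypothesis XY_indep : independent_RV2 P X Y.

Definition pairXY (w : Om) : TX * TY := (X w, Y w).

HB.instance Definition _ := isMeasurableFun.Build _ _ _ _ pairXY
  (measurable_fun_pair (measurable_funP X) (measurable_funP Y)).

Lemma distribution_pair_indep A : measurable A ->
  (distribution P X \x distribution P Y) A = distribution P pairXY A.
Proof.
apply: product_measure_unique => B C mB mC.
by rewrite /distribution /= -XY_indep.
Qed.

Lemma integrable_pair_indep (h : TX * TY -> R) : measurable_fun setT h ->
  (h \o pairXY)%R \in Lfun P 1 ->
  (distribution P X \x distribution P Y).-integrable setT (EFin \o h).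
Proof.
move=> mh /(integrable_distribution mh)/integrableP[mEh hfin].
apply/integrableP; split => //.
by rewrite (eq_measure_integral (distribution P pairXY)) // => A mA _;
  exact: distribution_pair_indep.
Qed.

Lemma expectationM_indep (f : TX -> R) (g : TY -> R) :
  measurable_fun setT f -> measurable_fun setT g ->
  (f \o X)%R \in Lfun P 1 -> (g \o Y)%R \in Lfun P 1 ->
  ((f \o X) \* (g \o Y))%R \in Lfun P 1 ->
  'E_P[(f \o X) \* (g \o Y)] = 'E_P[f \o X] * 'E_P[g \o Y].
Proof.
move=> mf mg fX1 gY1 fgXY1.
pose h (z : TX * TY) := (f z.1 * g z.2)%R.
have mh : measurable_fun setT h.
  by apply: measurable_funM; apply: measurableT_comp.
have intg := integrable_distribution mg gY1.
have gfin : \int[distribution P Y]_y (g y)%:E \is a fin_num.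
  exact: integrable_fin_num.
rewrite (expectation_distribution (Z := pairXY) mh) //.
rewrite (expectation_distribution mf) // (expectation_distribution mg) //.
rewrite (eq_measure_integral (distribution P X \x distribution P Y));
  last first.
  by move=> A mA _; exact/esym/distribution_pair_indep.
rewrite -(integral12_prod_meas1 (integrable_pair_indep mh fgXY1)).
rewrite /fubini_F /h /=.
under eq_integral => x _ do
  rewrite (eq_integral (fun y => (f x)%:E * (g y)%:E))
    ?(integralZl measurableT intg) //.
rewrite -(fineK gfin) integralZr //; exact: integrable_distribution.
Qed.

Lemma covariance_indep (f : TX -> R) (g : TY -> R) :
  measurable_fun setT f -> measurable_fun setT g ->
  (f \o X)%R \in Lfun P 2%:E -> (g \o Y)%R \in Lfun P 2%:E ->
  covariance P (f \o X) (g \o Y) = 0.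
Proof.
move=> mf mg fX2 gY2.
have fX1 := Lfun2_Lfun1 fX2; have gY1 := Lfun2_Lfun1 gY2.
have fgXY1 := Lfun2_mul_Lfun1 fX2 gY2.
rewrite covarianceE // [X in X - _](expectationM_indep mf mg) //.
by rewrite subee // fin_numM // expectation_fin_num.
Qed.

Lemma varianceBB_indep (T : Om -> R) (f : TX -> R) (g : TY -> R) :
  T \in Lfun P 2%:E -> admissible P X f -> admissible P Y g ->
  'V_P[(T \- (f \o X) \- (g \o Y))%R] =
  'V_P[(T \- (f \o X))%R] + 'V_P[(T \- (g \o Y))%R] - 'V_P[T].
Proof.
move=> T2 [mf fX2] [mg gY2].
exact: varianceBB_uncorrelated T2 fX2 gY2 (covariance_indep mf mg fX2 gY2).
Qed.

End independent_product.

Section ereal_inf_sum.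
Local Open Scope ereal_scope.
Context {R : realType}.

Lemma ereal_inf_fin_num {I : Type} (A : set I) (F : I -> \bar R) :
  A !=set0 -> (forall i, 0 <= F i) -> (forall i, A i -> F i \is a fin_num) ->
  ereal_inf (F @` A) \is a fin_num.
Proof.
move=> [i Ai] F0 Ffin; rewrite ge0_fin_numE; last first.
  by apply: le_ereal_inf_tmp => _ [j _ <-].
apply: (@le_lt_trans _ _ (F i)); first exact: ereal_inf_lbound.
by rewrite ltey_eq Ffin.
Qed.

Lemma ereal_inf_sum_setX {I J : Type} (A : set I) (B : set J)
    (F : I -> \bar R) (G : J -> \bar R) (v : \bar R) :
  ereal_inf (F @` A) \is a fin_num -> ereal_inf (G @` B) \is a fin_num ->
  v \is a fin_num ->
  ereal_inf [set F p.1 + G p.2 - v | p in A `*` B] =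
  ereal_inf (F @` A) + ereal_inf (G @` B) - v.
Proof.
move=> infF_fin infG_fin v_fin.
apply/eqP; rewrite eq_le; apply/andP; split; last first.
  apply: le_ereal_inf_tmp => _ [[i j] [Ai Bj] <-]; apply: leeB => //.
  by apply: leeD; apply: ereal_inf_lbound; [exists i | exists j].
apply/lee_addgt0Pr => e e_gt0.
have e2_gt0 : (0 < e / 2)%R by rewrite divr_gt0.
have [_ [i Ai <-] Fi] :
    exists2 x, (F @` A) x & x < ereal_inf (F @` A) + (e / 2)%:E.
  by apply: ereal_inf_lt; rewrite lteDl.
have [_ [j Bj <-] Gj] :
    exists2 x, (G @` B) x & x < ereal_inf (G @` B) + (e / 2)%:E.
  by apply: ereal_inf_lt; rewrite lteDl.
apply: ge_ereal_inf; exists (F i + G j - v); first by exists (i, j).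
apply: le_trans (leeB (leeD (ltW Fi) (ltW Gj)) (lexx v)) _.
move: infF_fin infG_fin v_fin; move: (ereal_inf _) (ereal_inf _) v => a b c.
move=> /fineK <- /fineK <- /fineK <-.
by rewrite -!EFinD lee_fin; lra.
Qed.

End ereal_inf_sum.

Section admissible.
Local Open Scope ereal_scope.
Context {R : realType} {d dZ : measure_display} {Om : measurableType d}
  {TZ : measurableType dZ} (P : probability Om R) (Z : Om -> TZ).

Lemma admissible_cst (c : R) : admissible P Z (cst c).
Proof. by split; [exact: measurable_cst | exact: Lfun_cst]. Qed.

Lemma variance_admissible_fin_num (T : Om -> R) (f : TZ -> R) :
  T \in Lfun P 2%:E -> admissible P Z f ->
  'V_P[(T \- (f \o Z))%R] \is a fin_num.
Proof. by move=> T2 [_ fZ2]; exact/variance_fin_num/Lfun2B. Qed.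

Lemma ereal_inf_variance_admissible_fin_num (T : Om -> R) :
  T \in Lfun P 2%:E ->
  ereal_inf [set 'V_P[(T \- (f \o Z))%R] | f in [set f | admissible P Z f]]
    \is a fin_num.
Proof.
move=> T2; apply: ereal_inf_fin_num => [|f|f].
- by exists (cst 0%R); exact: admissible_cst.
- exact: variance_ge0.
- exact: variance_admissible_fin_num.
Qed.

End admissible.

Theorem theorem1 (R : realType) (d dX dY : measure_display)
  (Om : measurableType d) (TX : measurableType dX) (TY : measurableType dY)
  (P : probability Om R) (T : {RV P >-> R}) (X : {RV P >-> TX}) (Y : {RV P >-> TY}) :
  (T : Om -> R) \in Lfun P 2%:E ->
  independent_RV2 P X Y ->
  (Lr1 P T X + Lr1 P T Y = Lr2 P T X Y)%E.
Proof.
move=> T2 XY_indep.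
pose VX f := 'V_P[(T \- (f \o X))%R].
pose VY g := 'V_P[(T \- (g \o Y))%R].
have infX_fin : ereal_inf (VX @` [set f | admissible P X f]) \is a fin_num.
  exact: ereal_inf_variance_admissible_fin_num.
have infY_fin : ereal_inf (VY @` [set g | admissible P Y g]) \is a fin_num.
  exact: ereal_inf_variance_admissible_fin_num.
have VT_fin := variance_fin_num T2.
rewrite /Lr1 /Lr2.
have -> : [set 'V_P[(T \- (f.1 \o X) \- (f.2 \o Y))%R] |
      f in [set f | admissible P X f.1 /\ admissible P Y f.2]] =
    [set (VX f.1 + VY f.2 - 'V_P[T])%E |
      f in [set f | admissible P X f] `*` [set g | admissible P Y g]].
  by apply: eq_imagel => -[f g] [Xf Yg]; exact: varianceBB_indep.
rewrite (ereal_inf_sum_setX infX_fin infY_fin VT_fin).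
move: VT_fin infX_fin infY_fin; rewrite /VX /VY.
move: 'V_P[_] (ereal_inf _) (ereal_inf _) => v a b.
move=> /fineK <- /fineK <- /fineK <-.
by rewrite -!EFinN -!EFinD; congr EFin; lra.
Qed.
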